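(* Let $\Gamma$ be a finite triangle-free simplicial graph containing a $K_{3,3}$ subdivision $\Lambda$, and suppose $\Lambda$ has the minimum number of edges among all $K_{3,3}$ subdivisions $\Lambda''\subseteq\Gamma$ with $B(\Lambda'')\le B(\Lambda)$. Then $\Lambda$ has no bad edge with both endpoints on a single branch of $\Lambda$, and no bad edge connecting two $\Lambda$-non-essential vertices lying on adjacent branches of $\Lambda$.
   Context: A subdivision of a graph $H$ is obtained from $H$ by repeatedly inserting valence-two vertices into edges. For a $K_{3,3}$ subdivision $\Lambda\subseteq\Gamma$, the $\Lambda$-essential vertices are those of valence $3$ in $\Lambda$; other vertices of $\Lambda$ are $\Lambda$-non-essential. A branch of $\Lambda$ is a path in $\Lambda$ between two $\Lambda$-essential vertices with no other $\Lambda$-essential vertex on it; two branches are adjacent if they share an endpoint and disjoint otherwise. A bad edge of $\Lambda$ is an edge of $\Gamma$ not in $\Lambda$ whose endpoints are both vertices of $\Lambda$; $B(\Lambda)$ is the number of bad edges. *)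

(* Finite simple graphs as a symmetric irreflexive relation
   e : rel T on a finType T; edges are represented as 2-element sets [set x; y]. *)
From mathcomp Require Import all_boot.
Set Implicit Arguments. Unset Strict Implicit. Unset Printing Implicit Defensive.

Definition gedges (T : finType) (e : rel T) : {set {set T}} :=
  [set [set p.1; p.2] | p in [set p : T * T | e p.1 p.2]].

Definition triangle_free (T : finType) (e : rel T) : Prop :=
  forall x y z, e x y -> e y z -> e z x -> False.

Definition wedges (T : finType) (s : seq T) : {set {set T}} :=
  \bigcup_(p <- zip s (behead s)) [set [set p.1; p.2]].

(* (V, E) is a subgraph of Gamma that is a subdivision of K_{3,3}:
   six distinct branch vertices a_0,a_1,a_2 / b_0,b_1,b_2, and for every i, j a
   path a_i -- p i j -- b_j in Gamma, whose interior vertices are not branch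
   vertices and are disjoint from the interiors of the other paths;
   V and E are exactly the vertices and edges of these nine paths. *)
Definition isK33sub (T : finType) (e : rel T) (V : {set T}) (E : {set {set T}}) : Prop :=
  exists (a b : 'I_3 -> T) (p : 'I_3 -> 'I_3 -> seq T),
    [/\ [/\ injective a, injective b, (forall i j, a i != b j),
        (forall i j, path e (a i) (rcons (p i j) (b j))) &
        (forall i j, uniq (a i :: rcons (p i j) (b j)))],
        (forall i j x, x \in p i j -> forall k, x != a k /\ x != b k),
        (forall i j i' j' x, x \in p i j -> x \in p i' j' -> i = i' /\ j = j'),
        V = \bigcup_(i < 3) \bigcup_(j < 3) [set x in a i :: rcons (p i j) (b j)]
      & E = \bigcup_(i < 3) \bigcup_(j < 3) wedges (a i :: rcons (p i j) (b j))].

Definition degE (T : finType) (E : {set {set T}}) (x : T) : nat :=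
  #|[set y | [set x; y] \in E]|.

Definition essential (T : finType) (V : {set T}) (E : {set {set T}}) (x : T) : bool :=
  (x \in V) && (degE E x == 3).

Definition ladj (T : finType) (E : {set {set T}}) : rel T :=
  fun x y => [set x; y] \in E.

Definition branch (T : finType) (V : {set T}) (E : {set {set T}}) (s : seq T) : bool :=
  if s is x :: t then
    [&& t != [::], uniq s, path (ladj E) x t, essential V E x,
        essential V E (last x t) &
        all (fun z => [|| z == x, z == last x t | ~~ essential V E z]) s]
  else false.

Definition bends (T : finType) (s : seq T) : {set T} :=
  if s is x :: t then [set x; last x t] else set0.

(* two different branches sharing an endpoint (a branch is identified with its reverse) *)
Definition adjacent_branches (T : finType) (V : {set T}) (E : {set {set T}}) (s1 s2 : seq T) : Prop :=
  [/\ branch V E s1, branch V E s2, s2 <> s1, s2 <> rev s1 & bends s1 :&: bends s2 != set0].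

Definition bad_edge (T : finType) (e : rel T) (V : {set T}) (E : {set {set T}}) (x y : T) : bool :=
  [&& e x y, [set x; y] \notin E, x \in V & y \in V].

Definition nbad (T : finType) (e : rel T) (V : {set T}) (E : {set {set T}}) : nat :=
  #|[set f in gedges e | (f \notin E) && (f \subset V)]|.

(* We describe a K_{3,3} subdivision by its six branch vertices a_i, b_j and
   the interiors p i j of its nine paths a_i -- b_j (the data of [isK33sub]).
   Its essential vertices are exactly the a_i and b_j (degree 3, against at
   most 2 for interior vertices), so every branch lies on one path
   bpath i j = a_i :: p i j ++ [b_j], with both ends in {a_i, b_j}.

   A bad edge xy is then excluded by an exchange argument: we build another
   K_{3,3} subdivision which uses xy, lives on vertices of Lambda, keeps every
   edge of Lambda between its vertices, and loses a nonempty segment of some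
   path.  It has no more bad edges and (counting the two edges at the first
   lost vertex) strictly fewer edges, against minimality.  Two constructions
   suffice:
   - shortcut: x, y on a common path; replace the segment between them by xy;
   - reroute: x, y interior to paths a_i -- b_j1 and a_i -- b_j2; x becomes
     the new branch vertex, the path a_i -- x is appended in reverse to the
     third path at a_i and the segment a_i -- y is dropped.  Triangle-freeness
     guarantees this segment (or its counterpart a_i -- x) is nonempty.
   Adjacent branches meeting at some b_j reduce to the case of a_i by
   exchanging the roles of the a's and the b's. *)

From mathcomp Require Import all_boot zify.
Set Implicit Arguments. Unset Strict Implicit. Unset Printing Implicit Defensive.

(* Consecutive entries c, d of a sequence s are recorded as [infix [:: c; d] s]. *)
Section Consecutive.
Variable T : eqType.
Implicit Types (s : seq T) (c d u v w x y : T).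

Lemma zip_behead_infix s c d : ((c, d) \in zip s (behead s)) = infix [:: c; d] s.
Proof.
elim: s => [|x s IHs] //; case: s IHs => [|y s] IHs; first by rewrite /= andbF.
by rewrite [zip _ _]/= in_cons IHs infix_consl xpair_eqE /= prefix0s andbT.
Qed.

Lemma infix2_meml s c d : infix [:: c; d] s -> c \in s.
Proof. by move/mem_infix; apply; rewrite mem_head. Qed.

Lemma infix2_memr s c d : infix [:: c; d] s -> d \in s.
Proof. by move/mem_infix; apply; rewrite !inE eqxx orbT. Qed.

Lemma infix2_rev s c d : infix [:: d; c] (rev s) = infix [:: c; d] s.
Proof. exact: (infix_rev [:: c; d]). Qed.

Lemma infix2_cat s1 x s2 c d :
  infix [:: c; d] (s1 ++ x :: s2) =
  infix [:: c; d] (rcons s1 x) || infix [:: c; d] (x :: s2).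
Proof.
elim: s1 => [|w s1 IHs]; first by rewrite /= andbF.
rewrite cat_cons rcons_cons !(infix_consl _ w) IHs orbA; congr (_ || _).
by case: s1 {IHs} => [|? ?] /=; rewrite ?prefix0s.
Qed.

Lemma infix2_inner u m v c d :
  m != [::] -> infix [:: c; d] (u :: rcons m v) -> (c \in m) || (d \in m).
Proof.
elim: m u => [//|w m IHm] u _; rewrite rcons_cons infix_consl => /orP[].
  by move=> /andP[_ /andP[/eqP-> _]]; rewrite mem_head orbT.
case: (altP (m =P [::])) => [->|/IHm IH].
  by rewrite /= andbF !orbF => /andP[/eqP-> _]; rewrite mem_head.
by move=> /IH /orP[] H; rewrite !inE H !orbT.
Qed.

Lemma infix2_splice s1 u m v s2 c d :
  m != [::] -> infix [:: c; d] (s1 ++ u :: m ++ v :: s2) ->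
  [\/ infix [:: c; d] (rcons s1 u), infix [:: c; d] (v :: s2), c \in m | d \in m].
Proof.
move=> m0; rewrite infix2_cat -cat_cons infix2_cat rcons_cons.
case/orP => [->|/orP[/(infix2_inner m0)/orP[]|->]]; by constructor.
Qed.

Lemma infix2_succ_uniq s c d d' :
  uniq s -> infix [:: c; d] s -> infix [:: c; d'] s -> d = d'.
Proof.
have succE s1 s2 d1 : uniq (s1 ++ [:: c; d1] ++ s2) ->
    nth c (s1 ++ [:: c; d1] ++ s2) (index c (s1 ++ [:: c; d1] ++ s2)).+1 = d1.
  rewrite cat_uniq => /and3P[_ /hasPn c_s1 _].
  have /negbTE cNs1 : c \notin s1 by apply: c_s1; rewrite mem_head.
  by rewrite index_cat cNs1 /= eqxx addn0 nth_cat ltnNge leqnSn /= subSn // subnn.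
move=> us /infixP[s1 [s2 def_s]] /infixP[t1 [t2 def_s']].
by rewrite -(succE s1 s2 d) -?def_s // -(succE t1 t2 d') -?def_s'.
Qed.

Lemma infix2_pred_uniq s c c' d :
  uniq s -> infix [:: c; d] s -> infix [:: c'; d] s -> c = c'.
Proof. by rewrite -rev_uniq -!(infix2_rev s); apply: infix2_succ_uniq. Qed.

Lemma infix2_head s x c : uniq (x :: s) -> ~~ infix [:: c; x] (x :: s).
Proof.
move=> /andP[xNs _]; apply: contra xNs => /infixP[[|w s1] [s2 [_ ->]]] //=.
  by rewrite mem_head.
by rewrite mem_cat !inE eqxx !orbT.
Qed.

Lemma infix2_uniq_neq s c d : uniq s -> infix [:: c; d] s -> c != d.
Proof. by move=> us /infix_uniq/(_ us) /=; rewrite inE andbT. Qed.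

Lemma infix2_pred x s w : w \in s -> exists c, infix [:: c; w] (x :: s).
Proof.
case/splitPr=> s1 s2; exists (last x s1); apply/infixP; exists (belast x s1), s2.
by rewrite -cat_cons lastI cat_rcons.
Qed.

Lemma infix2_succ s y w : w \in s -> exists d, infix [:: w; d] (rcons s y).
Proof. by rewrite -mem_rev => /(infix2_pred y)[d]; exists d; rewrite -infix2_rev rev_rcons. Qed.

Lemma mem_split s x : x \in s -> exists s1 s2, s = s1 ++ x :: s2.
Proof. by case/splitPr=> s1 s2; exists s1, s2. Qed.

Lemma split2 s x y : x \in s -> y \in s -> x != y ->
  exists s1 m s2, s = s1 ++ x :: m ++ y :: s2 \/ s = s1 ++ y :: m ++ x :: s2.
Proof.
case/splitPr=> s1 s2; rewrite mem_cat inE => /orP[|/orP[/eqP->|]]; last first.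
- by case/splitPr=> m t2 _; exists s1, m, t2; left.
- by rewrite eqxx.
by case/splitPr=> t1 m _; exists t1, m, s2; right; rewrite -catA.
Qed.

Lemma uniq_splice s1 x m y s2 w :
  uniq (s1 ++ x :: m ++ y :: s2) -> w \in m -> w \notin s1 ++ x :: y :: s2.
Proof.
move=> + wm; rewrite -cat_rcons uniq_catCA cat_uniq => /and3P[_ /hasPn mN _].
by rewrite -cat_rcons; apply: contraL wm => /mN.
Qed.

Definition interior_of s := if s is u :: s' then behead (belast u s') else [::].

Lemma splice_ends s1 x m y s2 u t v : s1 ++ x :: m ++ y :: s2 = u :: rcons t v ->
  s1 ++ x :: y :: s2 = u :: rcons (interior_of (s1 ++ x :: y :: s2)) v.
Proof.
have ends s : 1 < size s -> s = head u s :: rcons (interior_of s) (last u s).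
  by case: s => [|w [|w' s]] //= _; rewrite -lastI.
move=> def; rewrite [LHS]ends ?size_cat ?addnS //; congr (_ :: rcons _ _).
  by case: s1 def => [|w s1] [].
by have := congr1 (last u) def; rewrite !last_cat /= last_cat last_rcons.
Qed.

End Consecutive.

(* A walk in the graph e is a sequence sorted by e. *)
Section Walks.
Variables (T : eqType) (e : rel T).

Lemma sorted_infix2 s c d : sorted e s -> infix [:: c; d] s -> e c d.
Proof. by move=> es /infix_sorted/(_ es) /andP[]. Qed.

Lemma sorted_rev_sym s : symmetric e -> sorted e (rev s) = sorted e s.
Proof. by move=> e_sym; rewrite rev_sorted; apply: eq_sorted => u v; rewrite e_sym. Qed.

End Walks.

Section Wedges.
Variable T : finType.

Lemma set2_eq (c d c' d' : T) :
  [set c; d] = [set c'; d'] -> (c = c' /\ d = d') \/ (c = d' /\ d = c').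
Proof.
move=> E; have: [&& c \in [set c'; d'], d \in [set c'; d'], c' \in [set c; d]
  & d' \in [set c; d]] by rewrite E !set21 !set22 -E set21 set22.
by case/and4P=> /set2P[] ? /set2P[] ? /set2P[] ? /set2P[] ?; subst; auto.
Qed.

Lemma wedgesP (s : seq T) f :
  reflect (exists c d, infix [:: c; d] s /\ f = [set c; d]) (f \in wedges s).
Proof.
rewrite /wedges bigcup_seq; apply: (iffP bigcupP) => [[[c d]]|[c [d [cd ->]]]].
  by rewrite zip_behead_infix => cd /set1P->; exists c, d.
by exists (c, d); rewrite ?zip_behead_infix ?set11.
Qed.

End Wedges.

Definition third (j1 j2 : 'I_3) : 'I_3 := inord (3 - j1 - j2).

Lemma third_spec j1 j2 l : j1 != j2 -> (l == third j1 j2) = (l != j1) && (l != j2).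
Proof. by move: j1 j2 l; do 3!case=> [[|[|[|//]]] ?]; rewrite /third -!val_eqE //= inordK. Qed.

Section K33Subdivisions.
Variables (T : finType) (e : rel T).
Implicit Types (a b : 'I_3 -> T) (p : 'I_3 -> 'I_3 -> seq T).

Definition bpath a b p i j : seq T := a i :: rcons (p i j) (b j).

Record k33 a b p : Prop := K33 {
  k33_inja : injective a;
  k33_injb : injective b;
  k33_ab : forall i j, a i != b j;
  k33_sorted : forall i j, sorted e (bpath a b p i j);
  k33_uniq : forall i j, uniq (bpath a b p i j);
  k33_inner : forall i j x, x \in p i j -> forall k, x != a k /\ x != b k;
  k33_disj : forall i j i' j' x, x \in p i j -> x \in p i' j' -> i = i' /\ j = j'
}.

Definition kverts a b p : {set T} :=
  \bigcup_(i < 3) \bigcup_(j < 3) [set x in bpath a b p i j].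

Definition kedges a b p : {set {set T}} :=
  \bigcup_(i < 3) \bigcup_(j < 3) wedges (bpath a b p i j).

Lemma isK33subP V E :
  isK33sub e V E <-> exists a b p, [/\ k33 a b p, V = kverts a b p & E = kedges a b p].
Proof.
by split=> [[a [b [p [[? ? ? ? ?] ? ? -> ->]]]]|[a [b [p [[? ? ? ? ? ? ?] -> ->]]]]];
  exists a, b, p.
Qed.

Lemma kvertsP a b p x :
  reflect (exists i j, x \in bpath a b p i j) (x \in kverts a b p).
Proof.
apply: (iffP bigcupP) => [[i _ /bigcupP[j _]]|[i [j xij]]].
  by rewrite inE => xij; exists i, j.
by exists i => //; apply/bigcupP; exists j; rewrite ?inE.
Qed.

Lemma kedgesP a b p f :
  reflect (exists i j c d, infix [:: c; d] (bpath a b p i j) /\ f = [set c; d])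
          (f \in kedges a b p).
Proof.
apply: (iffP bigcupP) => [[i _ /bigcupP[j _ /wedgesP[c [d]]]]|[i [j [c [d cd]]]]].
  by exists i, j, c, d.
by exists i => //; apply/bigcupP; exists j => //; apply/wedgesP; exists c, d.
Qed.

Lemma kedges_infix a b p i j c d :
  infix [:: c; d] (bpath a b p i j) -> [set c; d] \in kedges a b p.
Proof. by move=> cd; apply/kedgesP; exists i, j, c, d. Qed.

Lemma kedges_infix_rev a b p i j c d :
  infix [:: d; c] (bpath a b p i j) -> [set c; d] \in kedges a b p.
Proof. by rewrite setUC; apply: kedges_infix. Qed.

Lemma kedges2P a b p c d : [set c; d] \in kedges a b p ->
  exists i j, infix [:: c; d] (bpath a b p i j) \/ infix [:: d; c] (bpath a b p i j).
Proof.
by case/kedgesP=> i [j [c' [d' [cd /set2_eq[][-> ->]]]]]; exists i, j; [left|right].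
Qed.

Lemma kedges_sub_kverts a b p f : f \in kedges a b p -> f \subset kverts a b p.
Proof.
case/kedgesP=> i [j [c [d [/mem_infix cd ->]]]].
by apply/subsetP=> w /set2P[]->; apply/kvertsP; exists i, j; apply: cd; rewrite !inE eqxx ?orbT.
Qed.

Section Structure.
Variables (a b : 'I_3 -> T) (p : 'I_3 -> 'I_3 -> seq T).
Hypothesis K : k33 a b p.

Lemma mem_bpath i j x :
  (x \in bpath a b p i j) = [|| x == a i, x == b j | x \in p i j].
Proof. by rewrite inE mem_rcons inE. Qed.

Lemma interior_in_bpath i j w : w \in p i j -> w \in bpath a b p i j.
Proof. by rewrite mem_bpath => ->; rewrite !orbT. Qed.

Lemma a_notin_interior k i j : a k \notin p i j.
Proof. by apply/negP=> /(k33_inner K)/(_ k)[]; rewrite eqxx. Qed.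

Lemma b_notin_interior k i j : b k \notin p i j.
Proof. by apply/negP=> /(k33_inner K)/(_ k)[_]; rewrite eqxx. Qed.

Lemma a_bpath k i j : a k \in bpath a b p i j -> k = i.
Proof.
rewrite mem_bpath => /or3P[/eqP/(k33_inja K)//|/eqP akbj|]; last first.
  by rewrite (negbTE (a_notin_interior _ _ _)).
by case/eqP: (k33_ab K k j).
Qed.

Lemma b_bpath k i j : b k \in bpath a b p i j -> k = j.
Proof.
rewrite mem_bpath => /or3P[/eqP akbj|/eqP/(k33_injb K)//|]; last first.
  by rewrite (negbTE (b_notin_interior _ _ _)).
by case/eqP: (k33_ab K i k).
Qed.

Lemma interior_bpath i j k l x : x \in p i j -> x \in bpath a b p k l -> k = i /\ l = j.
Proof.
move=> xij; rewrite mem_bpath.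
have [/negbTE-> _] := k33_inner K xij k; have [_ /negbTE->] := k33_inner K xij l.
by move=> /(k33_disj K xij) [-> ->].
Qed.

Lemma uniq_interior i j : uniq (p i j).
Proof. by have := k33_uniq K i j; rewrite /bpath cons_uniq rcons_uniq => /and3P[]. Qed.

Lemma pick_interior i j w : w \in p i j -> [pick kl | w \in p kl.1 kl.2] = Some (i, j).
Proof.
move=> wij; case: pickP => [[k l] /= wkl|/(_ (i, j))]; last by rewrite wij.
by have [-> ->] := k33_disj K wij wkl.
Qed.

Lemma common_end (s1 s2 : seq T) i j1 i' j2 :
  bends s1 \subset [set a i; b j1] -> bends s2 \subset [set a i'; b j2] ->
  bends s1 :&: bends s2 != set0 -> i = i' \/ j1 = j2.
Proof.
move=> /subsetP ends1 /subsetP ends2 /set0Pn[w]; rewrite inE => /andP[/ends1 w1 /ends2].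
case/set2P: w1 => -> /set2P[].
- by move/(k33_inja K); left.
- by move/eqP; rewrite (negbTE (k33_ab K _ _)).
- by move/esym/eqP; rewrite (negbTE (k33_ab K _ _)).
- by move/(k33_injb K); right.
Qed.

Definition second i l := head (b l) (p i l).

Lemma infix_second i l : infix [:: a i; second i l] (bpath a b p i l).
Proof. by rewrite /bpath /second; case: (p i l) => [|w t] /=; rewrite !eqxx ?prefix0s. Qed.

Lemma second_inj i : injective (second i).
Proof.
move=> l l' eq_l; have wl' := infix2_memr (infix_second i l'); rewrite -eq_l in wl'.
have := infix2_memr (infix_second i l).
rewrite mem_bpath eq_sym (negbTE (infix2_uniq_neq (k33_uniq K i l) (infix_second i l))) /=.
case/orP=> [/eqP bl|/interior_bpath/(_ wl')[_ ->] //].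
by move: wl'; rewrite bl => /b_bpath.
Qed.

Lemma neighbours_a i : [set w | [set a i; w] \in kedges a b p] = [set second i l | l : 'I_3].
Proof.
apply/setP=> w; rewrite inE; apply/idP/imsetP=> [|[l _ ->]]; last first.
  exact: kedges_infix (infix_second i l).
case/kedges2P=> k [l [aw|wa]].
  have ik := a_bpath (infix2_meml aw); subst k.
  by exists l => //; apply: infix2_succ_uniq (k33_uniq K i l) aw (infix_second i l).
have ik := a_bpath (infix2_memr wa); subst k.
by have /negP := infix2_head w (k33_uniq K i l).
Qed.

Lemma deg_a i : degE (kedges a b p) (a i) = 3.
Proof. by rewrite /degE neighbours_a card_imset ?card_ord //; apply: second_inj. Qed.

(* An interior vertex is adjacent only to its predecessor and successor on its path. *)
Lemma deg_interior i j w : w \in p i j -> degE (kedges a b p) w <= 2.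
Proof.
move=> wij.
have [c cw] : exists c, infix [:: c; w] (bpath a b p i j).
  by apply: infix2_pred; rewrite mem_rcons inE wij orbT.
have [d wd] : exists d, infix [:: w; d] (bpath a b p i j).
  by rewrite /bpath -rcons_cons; apply: infix2_succ; rewrite inE wij orbT.
apply: (@leq_trans #|[set c; d]|); last by rewrite cards2; case: (c != d).
apply/subset_leq_card/subsetP=> v; rewrite inE => /kedges2P[k [l [wv|vw]]].
  have [kl lj] := interior_bpath wij (infix2_meml wv); subst k l.
  by rewrite (infix2_succ_uniq (k33_uniq K i j) wv wd) set22.
have [kl lj] := interior_bpath wij (infix2_memr vw); subst k l.
by rewrite (infix2_pred_uniq (k33_uniq K i j) vw cw) set21.
Qed.

Lemma essential_a i : essential (kverts a b p) (kedges a b p) (a i).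
Proof. by rewrite /essential deg_a eqxx andbT; apply/kvertsP; exists i, i; apply: mem_head. Qed.

Lemma interior_nonessential i j w :
  w \in p i j -> ~~ essential (kverts a b p) (kedges a b p) w.
Proof.
move/deg_interior=> deg2; rewrite /essential negb_and; apply/orP; right.
by apply: contraTneq deg2 => ->.
Qed.

End Structure.

Section Transpose.
Hypothesis e_sym : symmetric e.

Definition tp p : 'I_3 -> 'I_3 -> seq T := fun j i => rev (p i j).

Lemma bpath_tp a b p i j : bpath b a (tp p) j i = rev (bpath a b p i j).
Proof. by rewrite /bpath /tp rev_cons rev_rcons. Qed.

Lemma k33_tp a b p : k33 a b p -> k33 b a (tp p).
Proof.
case=> inja injb ab srt uq inner disj; split=> //.
- by move=> j i; rewrite eq_sym.
- by move=> j i; rewrite bpath_tp sorted_rev_sym.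
- by move=> j i; rewrite bpath_tp rev_uniq.
- by move=> j i x; rewrite mem_rev => /inner xab k; have [] := xab k.
- by move=> j i j' i' x; rewrite !mem_rev => /disj H /H[-> ->].
Qed.

Lemma kverts_tp a b p : kverts b a (tp p) = kverts a b p.
Proof.
apply/setP=> x; apply/kvertsP/kvertsP=> [[j [i]]|[i [j]]].
  by rewrite bpath_tp mem_rev; exists i, j.
by exists j, i; rewrite bpath_tp mem_rev.
Qed.

Lemma kedges_tp a b p : kedges b a (tp p) = kedges a b p.
Proof.
apply/setP=> f; apply/kedgesP/kedgesP=> [[j [i [c [d []]]]]|[i [j [c [d []]]]]].
  by rewrite bpath_tp infix2_rev => dc ->; exists i, j, d, c; rewrite setUC.
by rewrite -infix2_rev -bpath_tp => dc ->; exists j, i, d, c; rewrite setUC.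
Qed.

Lemma essential_b a b p j : k33 a b p -> essential (kverts a b p) (kedges a b p) (b j).
Proof. by move=> K; rewrite -kverts_tp -kedges_tp; apply: essential_a (k33_tp K) j. Qed.

End Transpose.

Section Branches.
Hypothesis e_sym : symmetric e.
Variables (a b : 'I_3 -> T) (p : 'I_3 -> 'I_3 -> seq T).
Hypothesis K : k33 a b p.
Local Notation ess := (essential (kverts a b p) (kedges a b p)).

Lemma essential_bpath i j x : x \in bpath a b p i j -> ess x = (x \notin p i j).
Proof.
rewrite mem_bpath => /or3P[/eqP->|/eqP->|xij].
- by rewrite (essential_a K) (a_notin_interior K).
- by rewrite (essential_b e_sym _ K) (b_notin_interior K).
- by rewrite xij (negbTE (interior_nonessential K xij)).
Qed.

Lemma essential_end i j x : x \in bpath a b p i j -> ess x -> x \in [set a i; b j].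
Proof.
move=> xij; rewrite (essential_bpath xij); move: xij.
by rewrite mem_bpath !inE => /or3P[->|->|->]; rewrite ?orbT.
Qed.

Lemma nonessential_interior i j x : x \in bpath a b p i j -> ~~ ess x -> x \in p i j.
Proof. by move=> xij; rewrite (essential_bpath xij) negbK. Qed.

Lemma follow i j w r : w \in bpath a b p i j -> path (ladj (kedges a b p)) w r ->
  (forall z, z \in belast w r -> ~~ ess z) -> {subset w :: r <= bpath a b p i j}.
Proof.
elim: r w => [|w' r IHr] w wij /=; first by move=> _ _ z; rewrite inE => /eqP->.
case/andP=> /kedges2P[k [l ww']] path_r ness.
have wp : w \in p i j by rewrite -[_ \in _]negbK -(essential_bpath wij) ness ?mem_head.
have w'ij : w' \in bpath a b p i j.
  case: ww' => [ww'|w'w].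
    by have [ki lj] := interior_bpath K wp (infix2_meml ww'); subst k l; apply: infix2_memr ww'.
  by have [ki lj] := interior_bpath K wp (infix2_memr w'w); subst k l; apply: infix2_meml w'w.
have sub_r := IHr w' w'ij path_r (fun z zr => ness z (mem_behead (s := w :: _) zr)).
by move=> z; rewrite inE => /predU1P[->|/sub_r].
Qed.

Lemma branch_in_bpath s : branch (kverts a b p) (kedges a b p) s ->
  exists i j, {subset s <= bpath a b p i j} /\ bends s \subset [set a i; b j].
Proof.
case: s => [//|u [//|v t]] /andP[_ /and5P[uniq_s path_s ess_u ess_l ends]].
have /andP[/kedges2P[i [j uv]] path_t] :
  ladj (kedges a b p) u v && path (ladj (kedges a b p)) v t := path_s.
rewrite cons_uniq (lastI v t) rcons_uniq in uniq_s; case/and3P: uniq_s => uNs lNb _.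
exists i, j; have [uij vij] : u \in bpath a b p i j /\ v \in bpath a b p i j.
  by case: uv => uv; rewrite (infix2_meml uv) (infix2_memr uv).
have sub : {subset u :: v :: t <= bpath a b p i j}.
  move=> z; rewrite inE => /predU1P[->//|]; move: z; apply: (follow vij path_t) => z zb.
  have zs : z \in u :: v :: t by rewrite in_cons (lastI v t) mem_rcons inE zb !orbT.
  have /or3P[/eqP zu|/eqP zl|//] := allP ends z zs.
    by move: uNs; rewrite -zu mem_rcons inE zb orbT.
  by move: lNb; rewrite -[last v t]zl zb.
split=> //; apply/subsetP=> z /set2P[]->.
  exact: essential_end uij ess_u.
by apply: essential_end ess_l; apply/sub/mem_last.
Qed.

End Branches.

Definition minimal_k33 (V : {set T}) (E : {set {set T}}) : Prop :=
  forall V'' E'', isK33sub e V'' E'' -> nbad e V'' E'' <= nbad e V E -> #|E| <= #|E''|.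

Lemma isK33sub_edges V E f : isK33sub e V E -> f \in E -> f \subset V.
Proof. by case/isK33subP=> a [b [p [_ -> ->]]]; apply: kedges_sub_kverts. Qed.

(* The exchange argument: a subdivision (V', E') on vertices of (V, E), with
   at most one new edge g, keeping the edges of E inside V', and missing a
   vertex z with two edges in E, contradicts the minimality of (V, E).
   Indeed its bad edges are bad for (V, E), while #|E'| <= #|E| + 1 - 2. *)
Lemma exchange V E V' E' g z c d :
  minimal_k33 V E -> isK33sub e V' E' -> V' \subset V -> E' \subset g |: E ->
  (forall f, f \in E -> f \subset V' -> f \in E') ->
  z \notin V' -> c != d -> [set z; c] \in E -> [set z; d] \in E -> False.
Proof.
move=> minE K' V'V E'E EV'E' zNV' cd zc zd.
have E_E' : #|E| <= #|E'|.
  apply: minE K' _; apply/subset_leq_card/subsetP=> f; rewrite !inE.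
  case/andP=> fG /andP[fNE' fV']; rewrite fG (subset_trans fV' V'V) andbT /=.
  by apply: contra fNE' => fE; apply: EV'E' fE fV'.
set B := [set [set z; c]; [set z; d]].
have cardB : #|B| = 2.
  rewrite cards2; case: eqP => // zczd; exfalso; move/eqP: cd; apply.
  have /set2P[cz|->//] : c \in [set z; d] by rewrite -zczd set22.
  have /set2P[dz|->//] : d \in [set z; c] by rewrite zczd set22.
  by rewrite cz dz.
have BgE : B \subset g |: E by apply/subsetP=> f /set2P[]->; apply: setU1r.
have E'sub : E' \subset (g |: E) :\: B.
  apply/subsetP=> f fE'; rewrite inE (subsetP E'E _ fE') andbT; apply/set2P=> -[] fz;
    have /subsetP/(_ z) := isK33sub_edges K' fE';
    by rewrite fz set21 (negbTE zNV') => /(_ isT).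
have := subset_leq_card E'sub; rewrite cardsD (setIidPr BgE) cardB cardsU1.
have : 0 < #|E| by apply/card_gt0P; exists [set z; c].
by move: E_E'; case: (_ \notin _) => /=; lia.
Qed.

Lemma exchange_segment a b p a' b' p' x y k l s1 u m v s2 :
  minimal_k33 (kverts a b p) (kedges a b p) -> k33 a b p -> k33 a' b' p' ->
  bpath a b p k l = s1 ++ u :: m ++ v :: s2 -> m != [::] ->
  (forall w, w \in m -> w \notin kverts a' b' p') ->
  (forall i j w, w \in bpath a' b' p' i j -> w \in kverts a b p) ->
  (forall i j c d, infix [:: c; d] (bpath a' b' p' i j) ->
     [set c; d] = [set x; y] \/ [set c; d] \in kedges a b p) ->
  (forall i j c d, infix [:: c; d] (bpath a b p i j) -> c \notin m -> d \notin m ->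
     [set c; d] \in kedges a' b' p') ->
  False.
Proof.
move=> minK K K' def_kl m0 mNV' V'V E'E EV'E'.
case: m def_kl m0 mNV' EV'E' => [//|z m] def_kl _ mNV' EV'E'.
have /andP[uNr _] : uniq (u :: z :: m ++ v :: s2).
  by move: (k33_uniq K k l); rewrite def_kl cat_uniq => /and3P[_ _].
have uz : infix [:: u; z] (bpath a b p k l).
  by rewrite def_kl; apply/infixP; exists s1, (m ++ v :: s2).
have zw : infix [:: z; head v m] (bpath a b p k l).
  rewrite def_kl; apply/infixP; exists (rcons s1 u), (behead (m ++ v :: s2)).
  by rewrite cat_rcons; case: (m).
apply: (@exchange _ _ _ _ [set x; y] z u (head v m) minK).
- by apply/isK33subP; exists a', b', p'.
- by apply/subsetP=> w /kvertsP[i [j /V'V]].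
- apply/subsetP=> f /kedgesP[i [j [c [d [/E'E cd ->]]]]].
  by rewrite in_setU1; case: cd => ->; rewrite ?eqxx ?orbT.
- move=> f /kedgesP[i [j [c [d [cd ->]]]]] /subsetP cdV'.
  apply: (EV'E' i j c d cd).
    by apply: contraL (mNV' c) (cdV' c _); rewrite set21.
  by apply: contraL (mNV' d) (cdV' d _); rewrite set22.
- exact: mNV' (mem_head z m).
- apply: (contraNneq _ uNr) => ->.
  by case: (m) => [|w t] /=; rewrite !inE ?mem_cat ?inE eqxx ?orbT.
- exact: kedges_infix_rev uz.
- exact: kedges_infix zw.
Qed.

Definition upd p i j t : 'I_3 -> 'I_3 -> seq T :=
  fun k l => if (k == i) && (l == j) then t else p k l.

Lemma bpath_upd a b p i j t k l : bpath a b (upd p i j t) k l =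
  if (k == i) && (l == j) then a i :: rcons t (b j) else bpath a b p k l.
Proof. by rewrite /bpath /upd; case: andP => [[/eqP-> /eqP->]|]. Qed.

Lemma k33_upd a b p i j t : k33 a b p ->
  sorted e (a i :: rcons t (b j)) -> uniq (a i :: rcons t (b j)) -> {subset t <= p i j} ->
  k33 a b (upd p i j t).
Proof.
case=> inja injb ab srt uq inner disj st ut tp.
have sub k l : {subset upd p i j t k l <= p k l}.
  by rewrite /upd; case: andP => [[/eqP-> /eqP->]|] // w.
split=> // [k l|k l|k l w /sub/inner //|k l k' l' w /sub wkl /sub]; last exact: disj.
  by rewrite bpath_upd; case: ifP.
by rewrite bpath_upd; case: ifP.
Qed.

Section Shortcut.
Variables (a b : 'I_3 -> T) (p : 'I_3 -> 'I_3 -> seq T).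
Hypothesis K : k33 a b p.
Variables (i j : 'I_3) (s1 m s2 : seq T) (x y : T).
Hypotheses (def_ij : bpath a b p i j = s1 ++ x :: m ++ y :: s2) (exy : e x y).

Local Notation s' := (s1 ++ x :: y :: s2).
Local Notation t := (interior_of s').

Definition shortcut_p := upd p i j t.

Lemma shortcut_shape : s' = a i :: rcons t (b j).
Proof. exact: splice_ends (esym def_ij). Qed.

Lemma shortcut_subseq : subseq s' (bpath a b p i j).
Proof. by rewrite def_ij; apply: cat_subseq => //=; rewrite eqxx; apply: suffix_subseq. Qed.

Lemma shortcut_bpath k l :
  bpath a b shortcut_p k l = if (k == i) && (l == j) then s' else bpath a b p k l.
Proof. by rewrite bpath_upd -shortcut_shape. Qed.

Lemma k33_shortcut : k33 a b shortcut_p.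
Proof.
have us' : uniq s' := subseq_uniq shortcut_subseq (k33_uniq K i j).
apply: k33_upd; rewrite -?shortcut_shape //.
  move: (k33_sorted K i j); rewrite def_ij !sorted_cat_cons cat_path /=.
  by case/andP=> -> /and3P[_ _ ->]; rewrite exy.
move=> w wt; move: us'; rewrite shortcut_shape cons_uniq rcons_uniq mem_rcons inE negb_or.
case/and3P=> /andP[_ aNt] bNt _.
have := mem_subseq shortcut_subseq (_ : w \in s'); rewrite shortcut_shape mem_bpath.
by rewrite inE mem_rcons inE wt !orbT => /(_ isT)/or3P[/eqP wE|/eqP wE|//];
  [move: aNt|move: bNt]; rewrite -wE wt.
Qed.

Lemma shortcut_removed w : w \in m -> w \notin kverts a b shortcut_p.
Proof.
move=> wm; have us : uniq (s1 ++ x :: m ++ y :: s2) by rewrite -def_ij (k33_uniq K).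
have wNs' := uniq_splice us wm.
have wp : w \in p i j.
  have : w \in bpath a b p i j by rewrite def_ij !(mem_cat, inE) wm !orbT.
  rewrite mem_bpath => /or3P[/eqP wE|/eqP wE|//]; move: wNs'; rewrite shortcut_shape wE.
    by rewrite mem_head.
  by rewrite inE mem_rcons mem_head orbT.
apply/kvertsP=> -[k [l]]; rewrite shortcut_bpath; case: ifP => [_|/negbT kl]; first exact/negP.
by case/(interior_bpath K wp)=> ki lj; rewrite ki lj !eqxx in kl.
Qed.

(* If xy is not an edge of Lambda, m is nonempty and the shortcut contradicts minimality. *)
Lemma shortcut_contra :
  minimal_k33 (kverts a b p) (kedges a b p) -> [set x; y] \notin kedges a b p -> False.
Proof.
move=> minK xyNE; have m0 : m != [::].
  apply: contraNneq xyNE => m0; apply: (kedges_infix (i := i) (j := j)).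
  by rewrite def_ij m0; apply/infixP; exists s1, s2.
apply: (exchange_segment minK K k33_shortcut def_ij m0 shortcut_removed (x := x) (y := y)).
- move=> k l w; rewrite shortcut_bpath; case: ifP => _ wkl; apply/kvertsP; last by exists k, l.
  by exists i, j; apply: (mem_subseq shortcut_subseq).
- move=> k l c d; rewrite shortcut_bpath; case: ifP => _ cd; last by right; apply: kedges_infix cd.
  move: cd; rewrite infix2_cat => /orP[cd|].
    by right; apply: (kedges_infix (i := i) (j := j)); rewrite def_ij -cat_rcons infix_catr.
  rewrite infix_consl => /orP[/andP[/eqP-> /andP[/eqP-> _]]|cd]; first by left.
  by right; apply: (kedges_infix (i := i) (j := j)); rewrite def_ij -cat_cons catA infix_catl.
- move=> k l c d cd cNm dNm.
  case: (boolP ((k == i) && (l == j))) => [/andP[/eqP ki /eqP lj]|kl]; last first.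
    by apply: (kedges_infix (i := k) (j := l)); rewrite shortcut_bpath (negbTE kl).
  subst k l; apply: (kedges_infix (i := i) (j := j)); rewrite shortcut_bpath !eqxx -cat_rcons.
  move: cd; rewrite def_ij => /(infix2_splice m0)[cd|cd|cm|dm].
  + exact: infix_catr.
  + exact: infix_catl.
  + by rewrite cm in cNm.
  + by rewrite dm in dNm.
Qed.

End Shortcut.

Lemma shortcut_free a b p i j x y : symmetric e -> k33 a b p ->
  minimal_k33 (kverts a b p) (kedges a b p) -> x != y -> e x y ->
  [set x; y] \notin kedges a b p -> x \in bpath a b p i j -> y \in bpath a b p i j -> False.
Proof.
move=> e_sym K minK xy exy xyNE xij yij; have [s1 [m [s2 [def|def]]]] := split2 xij yij xy.
  exact: (shortcut_contra K def exy minK xyNE).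
by apply: (shortcut_contra K def _ minK); rewrite 1?e_sym // setUC.
Qed.

(* Reroute: x and y interior to the paths (i, j1) and (i, j2), with the
   nonempty segment z :: q2 between a i and y.  The new branch vertex x
   replaces a i; the paths from x are the rest of the path (i, j1), the edge xy
   followed by the rest of the path (i, j2), and the reversed initial segment
   of the path (i, j1) followed by the path (i, l3) for the third index l3. *)
Section Reroute.
Hypothesis e_sym : symmetric e.
Variables (a b : 'I_3 -> T) (p : 'I_3 -> 'I_3 -> seq T).
Hypothesis K : k33 a b p.
Variables (i j1 j2 : 'I_3) (x y z : T) (q1 r1 q2 r2 : seq T).
Hypotheses (j12 : j1 != j2) (exy : e x y).
Hypotheses (def1 : p i j1 = q1 ++ x :: r1) (def2 : p i j2 = z :: q2 ++ y :: r2).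

Local Notation l3 := (third j1 j2).

Definition reroute_a k := if k == i then x else a k.

Definition reroute_p k l :=
  if k != i then p k l else
  if l == j1 then r1 else if l == j2 then y :: r2 else rev q1 ++ a i :: p i l.

Local Notation bpath' := (bpath reroute_a b reroute_p).

Lemma third_neq : l3 != j1 /\ l3 != j2.
Proof. by have /andP[] : (l3 != j1) && (l3 != j2) by rewrite -third_spec. Qed.

Variant reroute_spec k l : seq T -> seq T -> Prop :=
  | RerouteOther of k != i : reroute_spec k l (p k l) (bpath a b p k l)
  | RerouteJ1 of k = i & l = j1 : reroute_spec k l r1 (x :: rcons r1 (b j1))
  | RerouteJ2 of k = i & l = j2 : reroute_spec k l (y :: r2) (x :: y :: rcons r2 (b j2))
  | RerouteThird of k = i & l = l3 :
      reroute_spec k l (rev q1 ++ a i :: p i l3) (x :: rev q1 ++ bpath a b p i l3).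

Lemma rerouteP k l : reroute_spec k l (reroute_p k l) (bpath' k l).
Proof.
rewrite /bpath /reroute_p /reroute_a; case: (altP (k =P i)) => [->|ki]; last first.
  by apply: RerouteOther.
rewrite /=; case: (altP (l =P j1)) => [->|l1]; first exact: RerouteJ1.
case: (altP (l =P j2)) => [->|l2]; first exact: RerouteJ2.
have l_3 : l = l3 by apply/eqP; rewrite third_spec // l1 l2.
by rewrite /= rcons_cat; subst l; apply: RerouteThird.
Qed.

Lemma reroute_bpath_third : bpath' i l3 = x :: rev q1 ++ bpath a b p i l3.
Proof.
have [/negbTE l3j1 /negbTE l3j2] := third_neq.
by rewrite /bpath /reroute_a /reroute_p !eqxx /= l3j1 l3j2 rcons_cat.
Qed.

Lemma old_bpath_j1 : bpath a b p i j1 = (a i :: q1) ++ x :: rcons r1 (b j1).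
Proof. by rewrite /bpath def1 rcons_cat. Qed.

Lemma old_bpath_j2 : bpath a b p i j2 = [::] ++ a i :: (z :: q2) ++ y :: rcons r2 (b j2).
Proof. by rewrite /bpath def2 -cat_cons rcons_cat. Qed.

Lemma rev_prefix_j1 : rcons (x :: rev q1) (a i) = rev (rcons (a i :: q1) x).
Proof. by rewrite rev_rcons rev_cons. Qed.

Lemma x_interior : x \in p i j1.
Proof. by rewrite def1 mem_cat mem_head orbT. Qed.

Lemma x_interior_only k l : x \in p k l -> k = i /\ l = j1.
Proof. by move/(k33_disj K x_interior)=> [<- <-]. Qed.

Lemma q1_interior w : w \in q1 -> w \in p i j1.
Proof. by rewrite def1 mem_cat => ->. Qed.

Lemma r1_interior w : w \in r1 -> w \in p i j1.
Proof. by rewrite def1 mem_cat inE => ->; rewrite !orbT. Qed.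

Lemma yr2_interior w : w \in y :: r2 -> w \in p i j2.
Proof. by rewrite def2 -cat_cons mem_cat => ->; rewrite orbT. Qed.

Lemma split_j1_uniq : [/\ x \notin q1, x \notin r1 & forall w, w \in q1 -> w \notin r1].
Proof.
have := uniq_interior K i j1; rewrite def1 cat_uniq cons_uniq.
case/and3P=> _ /hasPn q1N /andP[-> _]; split=> [|//|w wq1].
  by apply: contraL (q1N x (mem_head _ _)); rewrite negbK.
by apply: contraL wq1 => wr1; apply: q1N; rewrite inE wr1 orbT.
Qed.

Lemma not_ai_q1 k l w : w \in p k l -> (k, l) != (i, j1) -> (w == a i) || (w \in q1) = false.
Proof.
move=> wkl kl; apply/norP; split; first by apply: contraNneq (a_notin_interior K i k l) => <-.
by apply: contra kl => /q1_interior/(k33_disj K wkl) [-> ->].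
Qed.

Lemma reroute_interior k l w :
  w \in reroute_p k l -> w != x /\ (w = a i \/ exists k0 l0, w \in p k0 l0).
Proof.
have old k0 l0 : w \in p k0 l0 -> (k0, l0) != (i, j1) ->
    w != x /\ (w = a i \/ exists k0 l0, w \in p k0 l0).
  move=> wkl kl; split; last by right; exists k0, l0.
  by apply: contraNneq kl => wx; rewrite wx in wkl; have [-> ->] := x_interior_only wkl.
have [xq1 xr1 _] := split_j1_uniq.
case: rerouteP => [ki|_ _|_ _|_ _].
- by move/old; apply; apply: contra ki => /eqP[->].
- move=> wr1; split; last by right; exists i, j1; apply: r1_interior.
  by apply: contraNneq xr1 => <-.
- by move/yr2_interior/old; apply; apply: contra j12 => /eqP[->].
rewrite mem_cat mem_rev inE => /or3P[wq1|/eqP->|wl3].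
- split; last by right; exists i, j1; apply: q1_interior.
  by apply: contraNneq xq1 => <-.
- by split; [rewrite eq_sym; have [] := k33_inner K x_interior i|left].
- by apply: (old i l3 wl3); apply: contra (third_neq).1 => /eqP[->].
Qed.

(* Each new interior vertex determines its new path: it is a i or in q1 on
   the path (i, l3), and otherwise it keeps its old path. *)
Definition reroute_owner w : option ('I_3 * 'I_3) :=
  if (w == a i) || (w \in q1) then Some (i, l3) else [pick kl | w \in p kl.1 kl.2].

Lemma reroute_ownerE k l w : w \in reroute_p k l -> reroute_owner w = Some (k, l).
Proof.
have [_ _ q1Nr1] := split_j1_uniq.
rewrite /reroute_owner; case: rerouteP => [ki|-> ->|-> ->|-> ->].
- move=> wkl; rewrite (not_ai_q1 wkl) ?(pick_interior K wkl) //.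
  by apply: contra ki => /eqP[->].
- move=> wr1; have wj1 := r1_interior wr1.
  have -> : (w == a i) || (w \in q1) = false.
    apply/norP; split; first by apply: contraNneq (a_notin_interior K i i j1) => <-.
    by apply: contraL wr1; apply: q1Nr1.
  by rewrite (pick_interior K wj1).
- move=> /yr2_interior wj2; rewrite (not_ai_q1 wj2) ?(pick_interior K wj2) //.
  by apply: contra j12 => /eqP[->].
rewrite mem_cat mem_rev inE => /or3P[->|->|wl3]; rewrite ?orbT //.
rewrite (not_ai_q1 wl3) ?(pick_interior K wl3) //.
by apply: contra (third_neq).1 => /eqP[->].
Qed.

Lemma reroute_sorted k l : sorted e (bpath' k l).
Proof.
case: rerouteP => [ki|_ _|_ _|_ _].
- exact: k33_sorted K k l.
- by have := k33_sorted K i j1; rewrite old_bpath_j1 sorted_cat_cons => /andP[].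
- rewrite /= exy; have := k33_sorted K i j2.
  by rewrite old_bpath_j2 cat0s -cat_cons sorted_cat_cons => /andP[].
rewrite /bpath -cat_cons sorted_cat_cons rev_prefix_j1 sorted_rev_sym //.
apply/andP; split; last exact: (k33_sorted K i l3).
by have := k33_sorted K i j1; rewrite old_bpath_j1 sorted_cat_cons => /andP[].
Qed.

Lemma reroute_uniq k l : uniq (bpath' k l).
Proof.
case: rerouteP => [ki|_ _|_ _|_ _].
- exact: k33_uniq K k l.
- by have := k33_uniq K i j1; rewrite old_bpath_j1 cat_uniq => /and3P[].
- rewrite cons_uniq; apply/andP; split; last first.
    by have := k33_uniq K i j2; rewrite old_bpath_j2 cat0s -cat_cons cat_uniq => /and3P[].
  apply: contra (j12) => xin.
  have /(interior_bpath K x_interior)[_ ->] : x \in bpath a b p i j2.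
    by rewrite old_bpath_j2 cat0s -cat_cons mem_cat xin orbT.
  by [].
have [xq1 _ _] := split_j1_uniq.
rewrite -cat_cons cat_uniq (k33_uniq K) andbT; apply/andP; split.
  rewrite cons_uniq mem_rev rev_uniq xq1.
  by have := uniq_interior K i j1; rewrite def1 cat_uniq => /andP[].
apply/hasPn=> w wb; rewrite inE mem_rev; apply: contra (third_neq).1.
case/orP=> [/eqP wx|/q1_interior wj1]; last by have [_ ->] := interior_bpath K wj1 wb.
by rewrite wx in wb; have [_ ->] := interior_bpath K x_interior wb.
Qed.

Lemma k33_reroute : k33 reroute_a b reroute_p.
Proof.
have xNab := k33_inner K x_interior.
split; [|exact: k33_injb K| |exact: reroute_sorted|exact: reroute_uniq| |].
- move=> k k'; rewrite /reroute_a; case: eqP => [->|_]; case: eqP => [->|_] //.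
  + by move=> xa; case: (xNab k'); rewrite xa eqxx.
  + by move=> ax; case: (xNab k); rewrite -ax eqxx.
  + exact: (k33_inja K).
- by move=> k l; rewrite /reroute_a; case: ifP => _; [have [] := xNab l|apply: (k33_ab K)].
- move=> k l w /reroute_interior[wx [wa|[k0 [l0 /(k33_inner K) wab]]]] m; rewrite /reroute_a.
    subst w; case: ifP => [_|mi]; first by rewrite wx (k33_ab K).
    by rewrite (inj_eq (k33_inja K)) eq_sym mi (k33_ab K).
  by case: ifP => _; rewrite ?wx; have [] := wab m.
- by move=> k l k' l' w /reroute_ownerE own /reroute_ownerE; rewrite own => -[-> ->].
Qed.

Lemma reroute_verts k l w : w \in bpath' k l -> w \in kverts a b p.
Proof.
have in1 : {subset x :: q1 <= bpath a b p i j1}.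
  by move=> v; rewrite old_bpath_j1 inE mem_cat !inE => /orP[->|->]; rewrite ?orbT.
move=> wkl; apply/kvertsP; move: wkl.
case: rerouteP => [ki|_ _|_ _|_ _] wkl.
- by exists k, l.
- by exists i, j1; rewrite old_bpath_j1 mem_cat wkl orbT.
- move: wkl; rewrite in_cons => /orP[/eqP->|wj2]; first by exists i, j1; rewrite in1 ?mem_head.
  by exists i, j2; rewrite old_bpath_j2 cat0s -cat_cons mem_cat wj2 orbT.
move: wkl; rewrite -cat_cons mem_cat => /orP[|wl3]; last by exists i, l3.
by rewrite inE mem_rev => wq1; exists i, j1; apply: in1; rewrite inE.
Qed.

Lemma reroute_removed w : w \in z :: q2 -> w \notin kverts reroute_a b reroute_p.
Proof.
move=> wzq2; have wj2 : w \in p i j2 by rewrite def2 -cat_cons mem_cat wzq2.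
have wNyr2 : w \notin y :: r2.
  have := uniq_interior K i j2; rewrite def2 -cat_cons cat_uniq => /and3P[_ /hasPn N _].
  by apply: contraL wzq2 => /N.
have wNj1 : w \notin p i j1.
  by apply: contra (j12) => /(k33_disj K wj2)[_ j21]; rewrite j21.
have wx : w != x by apply: contraNneq wNj1 => ->; apply: x_interior.
apply/kvertsP=> -[k [l]]; case: rerouteP => [ki|_ _|_ _|_ _].
- by case/(interior_bpath K wj2)=> ik _; rewrite ik eqxx in ki.
- move=> wb; have : w \in bpath a b p i j1 by rewrite old_bpath_j1 mem_cat wb orbT.
  by move/(interior_bpath K wj2)=> [_ j21]; move: (j12); rewrite j21 eqxx.
- rewrite inE (negbTE wx) /= -rcons_cons mem_rcons in_cons.
  case/orP=> [/eqP wb|]; last by apply/negP.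
  by move: wj2; rewrite wb (negbTE (b_notin_interior K _ _ _)).
rewrite inE (negbTE wx) /= mem_cat mem_rev => /orP[/q1_interior|]; first by apply/negP.
move/(interior_bpath K wj2)=> [_ l3j2]; have := (third_neq).2.
by rewrite l3j2 eqxx.
Qed.

Lemma reroute_new_pairs k l c d : infix [:: c; d] (bpath' k l) ->
  [set c; d] = [set x; y] \/ [set c; d] \in kedges a b p.
Proof.
case: rerouteP => [ki|_ _|_ _|_ _] => [cd|cd||].
- by right; apply: kedges_infix cd.
- by right; apply: (kedges_infix (i := i) (j := j1)); rewrite old_bpath_j1 infix_catl.
- rewrite infix_consl => /orP[/andP[/eqP-> /andP[/eqP-> _]]|cd]; first by left.
  right; apply: (kedges_infix (i := i) (j := j2)).
  by rewrite old_bpath_j2 cat0s -cat_cons infix_catl.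
rewrite /bpath -cat_cons infix2_cat rev_prefix_j1 => /orP[cd|cd]; right.
  apply: (kedges_infix_rev (i := i) (j := j1)).
  by rewrite old_bpath_j1 -cat_rcons infix_catr // -infix2_rev.
exact: kedges_infix cd.
Qed.

Lemma reroute_old_pairs k l c d : infix [:: c; d] (bpath a b p k l) ->
  c \notin z :: q2 -> d \notin z :: q2 -> [set c; d] \in kedges reroute_a b reroute_p.
Proof.
move=> cd cNm dNm.
suff : infix [:: c; d] (bpath' k l) \/ infix [:: d; c] (bpath' i l3).
  by case=> [/kedges_infix|/kedges_infix_rev].
move: cd; case: (rerouteP k l) => [ki|-> ->|-> ->|-> ->] cd; first by left.
- move: cd; rewrite old_bpath_j1 infix2_cat => /orP[cd|]; last by left.
  right; rewrite reroute_bpath_third -cat_cons -cat_rcons rev_prefix_j1.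
  by rewrite infix_catr // infix2_rev.
- have zq2_0 : z :: q2 != [::] by [].
  left; move: cd; rewrite old_bpath_j2 => /(infix2_splice zq2_0)[|cd|cm|dm].
  + by rewrite /= andbF.
  + by rewrite -[x :: _]cat1s infix_catl.
  + by rewrite cm in cNm.
  + by rewrite dm in dNm.
by left; rewrite -cat_cons infix_catl.
Qed.

Lemma reroute_contra : minimal_k33 (kverts a b p) (kedges a b p) -> False.
Proof.
move=> minK; apply: (exchange_segment minK K k33_reroute old_bpath_j2 isT) => //.
- exact: reroute_removed.
- exact: reroute_verts.
- exact: reroute_new_pairs.
- exact: reroute_old_pairs.
Qed.

End Reroute.

(* If
   neither y nor x is preceded by an interior vertex on its path, then
   a i, x, y form a triangle; otherwise one of the reroutings applies. *)
Lemma hub_free_a a b p i j1 j2 x y : symmetric e -> triangle_free e -> k33 a b p ->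
  minimal_k33 (kverts a b p) (kedges a b p) -> x \in p i j1 -> y \in p i j2 ->
  x != y -> e x y -> [set x; y] \notin kedges a b p -> False.
Proof.
move=> e_sym e_tf K minK xp yp xy exy xyNE; case: (eqVneq j1 j2) => [j21|j12].
  subst j2; apply: (shortcut_free e_sym K minK xy exy xyNE).
    exact: (interior_in_bpath a b xp).
  exact: (interior_in_bpath a b yp).
have [q1 [r1 def1]] := mem_split xp; have [q2 [r2 def2]] := mem_split yp.
case: q2 def2 => [|z q2] /= def2; last exact: (reroute_contra e_sym K j12 exy def1 def2 minK).
case: q1 def1 => [|z q1] /= def1; last first.
  by apply: (reroute_contra e_sym K (q1 := [::]) _ _ def2 def1 minK); rewrite 1?eq_sym 1?e_sym.
have adj_a v j r : p i j = v :: r -> e (a i) v.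
  move=> def; apply: (sorted_infix2 (k33_sorted K i j)).
  by rewrite /bpath def; apply/infixP; exists [::], (rcons r (b j)).
by apply: (e_tf (a i) x y (adj_a _ _ _ def1) exy); rewrite e_sym (adj_a _ _ _ def2).
Qed.

(* The same at a common b j, by exchanging the roles of the a's and the b's. *)
Lemma hub_free_b a b p j i1 i2 x y : symmetric e -> triangle_free e -> k33 a b p ->
  minimal_k33 (kverts a b p) (kedges a b p) -> x \in p i1 j -> y \in p i2 j ->
  x != y -> e x y -> [set x; y] \notin kedges a b p -> False.
Proof.
move=> e_sym e_tf K minK xp yp; rewrite -kedges_tp.
have xp' : x \in tp p j i1 by rewrite /tp mem_rev.
have yp' : y \in tp p j i2 by rewrite /tp mem_rev.
have minK' : minimal_k33 (kverts b a (tp p)) (kedges b a (tp p)) by rewrite kverts_tp kedges_tp.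
exact: (hub_free_a e_sym e_tf (k33_tp e_sym K) minK' xp' yp').
Qed.

End K33Subdivisions.

Unset Implicit Arguments.

Theorem mainTheorem7 (T : finType) (e : rel T)
  (e_sym : symmetric e) (e_irr : irreflexive e) (e_tf : triangle_free e)
  (V : {set T}) (E : {set {set T}}) (HK : isK33sub e V E)
  (Hmin : forall (V'' : {set T}) (E'' : {set {set T}}),
      isK33sub e V'' E'' -> nbad e V'' E'' <= nbad e V E -> #|E| <= #|E''|) :
  forall x y : T, bad_edge e V E x y ->
    ~ (exists s, [/\ branch V E s, x \in s & y \in s]) /\
    ~ (exists s1 s2, [/\ adjacent_branches V E s1 s2,
                          ~~ essential V E x, ~~ essential V E y, x \in s1 & y \in s2]).
Proof.
move=> x y /and4P[exy xyNE _ _].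
case/isK33subP: HK Hmin xyNE => a [b [p [K -> ->]]] minK xyNE.
have xy : x != y by apply: contraTneq exy => ->; rewrite e_irr.
split.
  case=> s [/(branch_in_bpath e_sym K)[i [j [sub _]]] xs ys].
  exact: (shortcut_free e_sym K minK xy exy xyNE (sub x xs) (sub y ys)).
case=> s1 [s2 [[B1 B2 _ _ common] nx ny xs ys]].
have [i [j1 [sub1 ends1]]] := branch_in_bpath e_sym K B1.
have [i' [j2 [sub2 ends2]]] := branch_in_bpath e_sym K B2.
have xp := nonessential_interior e_sym K (sub1 x xs) nx.
have yp := nonessential_interior e_sym K (sub2 y ys) ny.
case: (common_end K ends1 ends2 common) => [ii'|jj]; [subst i'|subst j2].
  exact: (hub_free_a e_sym e_tf K minK xp yp xy exy xyNE).
exact: (hub_free_b e_sym e_tf K minK xp yp xy exy xyNE).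
Qed.
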